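(* Let $Y=\langle X,\beta^*\rangle=\sum_{j=1}^pX_j\beta^*_j$ where $X\in\mathbb{Z}^p$ and $\beta^*\in\mathbb{R}^p$ with $\beta^*_j\in\mathcal{S}=\{a_1,\dots,a_{\mathcal{R}}\}$ for every $j$, where $\mathcal{S}$ is rationally independent. Let $t=(t_0,t_1,\dots,t_{\mathcal{R}})$ be an integer relation for the vector $(Y,a_1,\dots,a_{\mathcal{R}})$. Then $t\in H$, where $$H=\{k(-1,\theta_1^*,\dots,\theta^*_{\mathcal{R}}):k\in\mathbb{Z}\setminus\{0\}\},\qquad \theta^*_i=\sum_{j:\beta^*_j=a_i}X_j.$$
   Context: A finite set of reals is rationally independent if the only rational linear combination of its elements equal to $0$ is the trivial one. An integer relation for $b\in\mathbb{R}^k$ is a nonzero $m\in\mathbb{Z}^k$ with $\langle b,m\rangle=0$. *)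

From HB Require Import structures.
From mathcomp Require Import all_boot all_order all_algebra.
From mathcomp Require Import reals.
Set Implicit Arguments. Unset Strict Implicit. Unset Printing Implicit Defensive.
Import Order.TTheory GRing.Theory Num.Theory.
Local Open Scope ring_scope.

Definition rat_indep (R : realType) (n : nat) (a : 'I_n -> R) : Prop :=
  forall q : 'I_n -> rat, \sum_(i < n) ratr (q i) * a i = 0 -> forall i, q i = 0.

Definition int_relation (R : realType) (k : nat) (b : 'I_k -> R) (m : 'I_k -> int)
  : Prop :=
  (exists i, m i != 0) /\ \sum_(i < k) b i * (m i)%:~R = 0.

Definition cons_vec (T : Type) (n : nat) (x : T) (f : 'I_n -> T) : 'I_n.+1 -> T :=
  fun i => match unlift ord0 i with None => x | Some i' => f i' end.

Definition Yval (R : realType) (p : nat) (X : 'I_p -> int) (beta : 'I_p -> R) : R :=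
  \sum_(j < p) (X j)%:~R * beta j.

Definition theta (R : realType) (p r : nat) (X : 'I_p -> int) (beta : 'I_p -> R)
  (a : 'I_r -> R) (i : 'I_r) : int :=
  \sum_(j < p | beta j == a i) X j.

(* Since the a_i are distinct, grouping the terms of Y = <X, beta> by value gives
   Y = sum_i theta_i a_i.  Substituting this into t_0 Y + sum_i t_i a_i = 0 yields
   the integer relation sum_i (t_0 theta_i + t_i) a_i = 0 among the a_i, so
   t_i = -t_0 theta_i by independence; and t_0 <> 0, for otherwise t = 0.  Hence
   t = k (-1, theta) with k = -t_0. *)
From HB Require Import structures.
From mathcomp Require Import all_boot all_order all_algebra.
From mathcomp Require Import boolp reals.
From mathcomp Require Import ring.
Set Implicit Arguments. Unset Strict Implicit.
Import Order.TTheory GRing.Theory Num.Theory.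
Local Open Scope ring_scope.

Lemma cons_vec0 (T : Type) (n : nat) (x : T) (f : 'I_n -> T) :
  cons_vec x f ord0 = x.
Proof. by rewrite /cons_vec unlift_none. Qed.

Lemma cons_vec_lift (T : Type) (n : nat) (x : T) (f : 'I_n -> T) (i : 'I_n) :
  cons_vec x f (lift ord0 i) = f i.
Proof. by rewrite /cons_vec liftK. Qed.

Lemma eq_fun_ord_recl (T : Type) (n : nat) (g h : 'I_n.+1 -> T) :
  g ord0 = h ord0 -> (forall i : 'I_n, g (lift ord0 i) = h (lift ord0 i)) -> g = h.
Proof.
move=> gh0 gh_lift; apply/funext => i.
by case: (unliftP ord0 i) => [j|] ->.
Qed.

Lemma sum_cons_vecM (S : pzSemiRingType) (n : nat) (x : S) (f : 'I_n -> S)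
    (g : 'I_n.+1 -> S) :
  \sum_(i < n.+1) cons_vec x f i * g i =
  x * g ord0 + \sum_(i < n) f i * g (lift ord0 i).
Proof.
rewrite big_ord_recl cons_vec0; congr (_ + _).
by apply: eq_bigr => i _; rewrite cons_vec_lift.
Qed.

Section RationalIndependence.

Variables (R : realType) (n : nat) (a : 'I_n -> R).
Hypothesis a_indep : rat_indep a.

Lemma rat_indep_int (m : 'I_n -> int) :
  \sum_(i < n) (m i)%:~R * a i = 0 -> forall i, m i = 0.
Proof.
move=> msum0 i; apply/eqP; rewrite -(intr_eq0 rat); apply/eqP.
apply: (@a_indep (fun j => (m j)%:~R) _ i); rewrite -[RHS]msum0.
by apply: eq_bigr => j _; rewrite ratr_int.
Qed.

Lemma rat_indep_inj : injective a.
Proof.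
move=> i1 i2 a12; apply/eqP; apply/negPn/negP => ne12.
pose m i : int := (i == i1)%:R - (i == i2)%:R.
have sum_delta k : \sum_(i < n) ((i == k)%:R : int)%:~R * a i = a k.
  rewrite (bigD1 k) //= eqxx mul1r big1 ?addr0 // => i /negbTE ->.
  by rewrite mul0r.
have /(_ i1) : forall i, m i = 0.
  apply: rat_indep_int.
  under eq_bigr => i _ do rewrite /m rmorphB mulrBl.
  by rewrite sumrB !sum_delta a12 subrr.
by rewrite /m eqxx (negbTE ne12) subr0 => /eqP; rewrite oner_eq0.
Qed.

End RationalIndependence.

Lemma Yval_theta (R : realType) (p r : nat) (a : 'I_r -> R)
    (X : 'I_p -> int) (beta : 'I_p -> R) :
  injective a -> (forall j, exists i, beta j = a i) ->
  Yval X beta = \sum_(i < r) (theta X beta a i)%:~R * a i.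
Proof.
move=> a_inj beta_in_a; rewrite /Yval /theta.
under [RHS]eq_bigr => i _ do rewrite rmorph_sum mulr_suml.
rewrite (exchange_big_dep xpredT) //=; apply: eq_bigr => j _.
have [i0 ->] := beta_in_a j.
rewrite (eq_bigl (pred1 i0)) ?big_pred1_eq // => i /=.
by apply/eqP/eqP => [/a_inj|->].
Qed.

Theorem lemma3 (R : realType) (p r : nat) (a : 'I_r -> R)
  (X : 'I_p -> int) (beta : 'I_p -> R)
  (hS : rat_indep a)
  (hbeta : forall j : 'I_p, exists i : 'I_r, beta j = a i)
  (t : 'I_r.+1 -> int)
  (ht : int_relation (cons_vec (Yval X beta) a) t) :
  exists k : int, k != 0 /\
    t = (fun i => k * cons_vec (-1) (theta X beta a) i).
Proof.
have [[i0 t_i0] rel] := ht.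
rewrite sum_cons_vecM (Yval_theta X (rat_indep_inj hS) hbeta) in rel.
have t_lift (i : 'I_r) : t (lift ord0 i) = - t ord0 * theta X beta a i.
  apply/eqP; rewrite mulNr -subr_eq0 opprK addrC; apply/eqP.
  pose m k := t ord0 * theta X beta a k + t (lift ord0 k).
  apply: (rat_indep_int hS (m := m)).
  rewrite -[RHS]rel mulr_suml -big_split /=.
  by apply: eq_bigr => k _; rewrite rmorphD rmorphM /=; ring.
have t0_neq0 : t ord0 != 0.
  apply: contraNneq t_i0 => t0_eq0.
  by case: (unliftP ord0 i0) => [j ->|->]; rewrite ?t_lift t0_eq0 ?oppr0 ?mul0r.
exists (- t ord0); split; first by rewrite oppr_eq0.
apply: eq_fun_ord_recl => [|i]; first by rewrite cons_vec0 mulrN1 opprK.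
by rewrite cons_vec_lift t_lift.
Qed.
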